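(* Let $W_\circ=\bigcup_{\lambda\in\Lambda^\circ}W(\lambda)$. Exactly one of the following holds: (a) if $\underline f<0<\overline f$, then $f(\lambda)=0$ has a unique solution $\hat\lambda\in\Lambda^\circ$ and $\widehat W=W_\circ=\{w(\hat\lambda)\}$; (b) if $\underline f=0=\overline f$, then $f(\lambda)=0$ for every $\lambda\in\Lambda^\circ$ and $\widehat W=W_\circ=\{0\}$; (c) in all other cases, $f(\lambda)=0$ has no solution in $\Lambda^\circ$ and $W_\circ=\emptyset$.
   Context: Regular dimension-reduced canonical form: $q\ge1$, $\gamma_1>\dots>\gamma_q$ nonzero reals with $\gamma_1>0$, $\Gamma^*=\operatorname{diag}(\gamma_1,\dots,\gamma_q)$, $\delta=(\delta_i)$ with $\delta_i\ge0$, $k^*\in\mathbb{R}$, $\varepsilon\ge0$; either ($m_0=0$) $\varepsilon=0$, $w=z\in\mathbb{R}^q$, $w_0=\delta$, $\Delta=\Gamma^*$, $d=0$; or ($m_0>0$) $\varepsilon>0$, $w=(y,z^\top)^\top\in\mathbb{R}^{q+1}$, $w_0=(0,\delta^\top)^\top$, $\Delta=\operatorname{diag}(0,\Gamma^* )$, $d=\varepsilon e_1$. Problem: minimise $\|w-w_0\|^2$ over $W=\{w:Q^*(w)=0\}\neq\emptyset$, $Q^*(w)=w^\top\Delta w+2d^\top w-k^*$; $\widehat W$ is the set of minimisers. Admissible region $\Lambda=(-\infty,\gamma_1^{-1}]$ if $\gamma_q>0$, $[\gamma_q^{-1},\gamma_1^{-1}]$ if $\gamma_q<0$; $\Lambda^\circ$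 its interior. $W(\lambda)$ is the set of $w\in W$ with $(I-\lambda\Delta)w=w_0+\lambda d$. For $\lambda\in\Lambda^\circ$, $w(\lambda)=(I-\lambda\Delta)^{-1}(w_0+\lambda d)$, $f(\lambda)=\sum_{i=1}^q(1-\lambda\gamma_i)^{-2}\gamma_i\delta_i^2+2\varepsilon^2\lambda-k^*$, $\underline f=\inf_{\Lambda^\circ}f$, $\overline f=\sup_{\Lambda^\circ}f$. *)

From Stdlib Require Import Reals Lra Lia.
Open Scope R_scope.

Fixpoint rsum (n : nat) (f : nat -> R) : R :=
  match n with
  | O => 0
  | S m => rsum m f + f m
  end.

(* Conventions.
   - gamma i, delta i (0 <= i < q) stand for gamma_{i+1}, delta_{i+1}.
   - b = false : case m0 = 0, w = z in R^q (indices 0..q-1).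
     b = true  : case m0 > 0, w = (y, z) in R^(q+1), index 0 is y,
                 index k+1 is z_{k+1}.
   - A vector of R^n is a function nat -> R vanishing at indices >= n. *)

Definition dim (b : bool) (q : nat) : nat := if b then S q else q.

Definition Rvec (n : nat) (w : nat -> R) : Prop :=
  forall i, (n <= i)%nat -> w i = 0.

Definition Delta (b : bool) (gamma : nat -> R) (j : nat) : R :=
  if b then match j with O => 0 | S k => gamma k end else gamma j.

Definition w0 (b : bool) (q : nat) (delta : nat -> R) (j : nat) : R :=
  if (dim b q <=? j)%nat then 0 else
  if b then match j with O => 0 | S k => delta k end else delta j.

Definition dvec (b : bool) (eps : R) (j : nat) : R :=
  if b then match j with O => eps | S _ => 0 end else 0.

Definition Qstar (b : bool) (q : nat) (gamma : nat -> R) (eps kst : R)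
  (w : nat -> R) : R :=
  rsum (dim b q) (fun j => Delta b gamma j * w j ^ 2)
  + 2 * rsum (dim b q) (fun j => dvec b eps j * w j) - kst.

Definition InW b q gamma eps kst (w : nat -> R) : Prop :=
  Rvec (dim b q) w /\ Qstar b q gamma eps kst w = 0.

Definition dist2 b q delta (w : nat -> R) : R :=
  rsum (dim b q) (fun j => (w j - w0 b q delta j) ^ 2).

Definition What b q gamma delta eps kst (w : nat -> R) : Prop :=
  InW b q gamma eps kst w /\
  forall v, InW b q gamma eps kst v -> dist2 b q delta w <= dist2 b q delta v.

Definition Lam (q : nat) (gamma : nat -> R) (l : R) : Prop :=
  if Rlt_dec 0 (gamma (q - 1)%nat) then l <= / gamma 0%nat
  else / gamma (q - 1)%nat <= l /\ l <= / gamma 0%nat.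

Definition Lam_int (q : nat) (gamma : nat -> R) (l : R) : Prop :=
  if Rlt_dec 0 (gamma (q - 1)%nat) then l < / gamma 0%nat
  else / gamma (q - 1)%nat < l /\ l < / gamma 0%nat.

Definition Wl b q gamma delta eps kst (l : R) (w : nat -> R) : Prop :=
  InW b q gamma eps kst w /\
  forall j, (j < dim b q)%nat ->
    (1 - l * Delta b gamma j) * w j = w0 b q delta j + l * dvec b eps j.

Definition wlam b q gamma delta eps (l : R) (j : nat) : R :=
  if (dim b q <=? j)%nat then 0 else
  (w0 b q delta j + l * dvec b eps j) / (1 - l * Delta b gamma j).

Definition fsec (q : nat) (gamma delta : nat -> R) (eps kst : R) (l : R) : R :=
  rsum q (fun i => gamma i * delta i ^ 2 / (1 - l * gamma i) ^ 2)
  + 2 * eps ^ 2 * l - kst.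

Definition Wcirc b q gamma delta eps kst (w : nat -> R) : Prop :=
  exists l, Lam_int q gamma l /\ Wl b q gamma delta eps kst l w.

(* For lambda in the interior of Lambda every denominator 1 - lambda Delta_jj is positive, so
   completing the square gives, on W,
     ||w - w0||^2 = lambda k* + sum_j (1 - lambda Delta_jj) (w_j - w(lambda)_j)^2 + const.
   Hence if f(lambda) = 0, i.e. w(lambda) lies on W, then w(lambda) is the unique minimiser.
   The secular function f is continuous on the interior of Lambda, and it is strictly
   increasing unless eps = 0 and delta = 0, in which case it is the constant -k*.  The three
   cases then follow from the intermediate value theorem. *)

From Stdlib Require Import Reals Lra Lia FunctionalExtensionality Classical.
Open Scope R_scope.

Lemma rsum_ext n f g : (forall i, (i < n)%nat -> f i = g i) -> rsum n f = rsum n g.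
Proof.
  induction n as [|n IH]; intros H; simpl; [reflexivity|].
  rewrite IH by (intros; apply H; lia); rewrite H by lia; reflexivity.
Qed.

Lemma rsum_eq0 n f : (forall i, (i < n)%nat -> f i = 0) -> rsum n f = 0.
Proof.
  intros H; rewrite (rsum_ext n f (fun _ => 0)) by exact H.
  clear H; induction n; simpl; lra.
Qed.

Lemma rsum_le n f g : (forall i, (i < n)%nat -> f i <= g i) -> rsum n f <= rsum n g.
Proof.
  induction n as [|n IH]; intros H; simpl; [lra|].
  pose proof (IH (fun i hi => H i ltac:(lia))); pose proof (H n ltac:(lia)); lra.
Qed.

Lemma rsum_ge0 n f : (forall i, (i < n)%nat -> 0 <= f i) -> 0 <= rsum n f.
Proof.
  intros H; replace 0 with (rsum n (fun _ => 0)) by (apply rsum_eq0; auto).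
  now apply rsum_le.
Qed.

Lemma rsum_lt n f g : (forall i, (i < n)%nat -> f i <= g i) ->
  (exists i, (i < n)%nat /\ f i < g i) -> rsum n f < rsum n g.
Proof.
  induction n as [|n IH]; intros H [i [Hi Hlt]]; simpl; [lia|].
  pose proof (rsum_le n f g (fun j hj => H j ltac:(lia))); pose proof (H n ltac:(lia)).
  destruct (Nat.eq_dec i n) as [->|Hne]; [lra|].
  enough (rsum n f < rsum n g) by lra.
  apply IH; [intros j hj; apply H; lia | exists i; split; [lia | exact Hlt]].
Qed.

Lemma rsum_ge0_eq0 n f : (forall i, (i < n)%nat -> 0 <= f i) -> rsum n f = 0 ->
  forall i, (i < n)%nat -> f i = 0.
Proof.
  intros H E i Hi; apply Rle_antisym; [|exact (H i Hi)].
  destruct (Rle_dec (f i) 0) as [Hle|Hgt]; [exact Hle|].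
  enough (0 < rsum n f) by lra.
  replace 0 with (rsum n (fun _ => 0)) by (apply rsum_eq0; auto).
  apply rsum_lt; [exact H | exists i; split; [exact Hi | lra]].
Qed.

Lemma rsum_succ_l n f : rsum (S n) f = f 0%nat + rsum n (fun i => f (S i)).
Proof. induction n as [|n IH]; simpl in *; [ring | rewrite IH; ring]. Qed.

Lemma continuity_pt_rsum n (f : R -> nat -> R) x :
  (forall i, (i < n)%nat -> continuity_pt (fun y => f y i) x) ->
  continuity_pt (fun y => rsum n (f y)) x.
Proof.
  induction n as [|n IH]; intros H; simpl.
  - now apply continuity_pt_const.
  - apply (continuity_pt_plus (fun y => rsum n (f y)) (fun y => f y n));
      [apply IH; intros; apply H; lia | apply H; lia].
Qed.

Lemma rsum_complete_square n (a d c w : nat -> R) l :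
  (forall j, (j < n)%nat -> 1 - l * a j <> 0) ->
  rsum n (fun j => (w j - c j) ^ 2) =
  l * (rsum n (fun j => a j * w j ^ 2) + 2 * rsum n (fun j => d j * w j))
  + rsum n (fun j => (1 - l * a j) * (w j - (c j + l * d j) / (1 - l * a j)) ^ 2)
  + rsum n (fun j => c j ^ 2 - (c j + l * d j) ^ 2 / (1 - l * a j)).
Proof.
  induction n as [|n IH]; intros H; cbn [rsum]; [ring|].
  rewrite IH by (intros; apply H; lia).
  field; apply H; lia.
Qed.

Lemma secular_term_gap g d l1 l2 : 0 < 1 - l1 * g -> 0 < 1 - l2 * g ->
  g * d ^ 2 / (1 - l2 * g) ^ 2 - g * d ^ 2 / (1 - l1 * g) ^ 2 =
  (g * d) ^ 2 * (l2 - l1) * ((1 - l1 * g) + (1 - l2 * g))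
    / ((1 - l1 * g) ^ 2 * (1 - l2 * g) ^ 2).
Proof. intros; field; lra. Qed.

Lemma secular_term_le g d l1 l2 : l1 < l2 -> 0 < 1 - l1 * g -> 0 < 1 - l2 * g ->
  g * d ^ 2 / (1 - l1 * g) ^ 2 <= g * d ^ 2 / (1 - l2 * g) ^ 2.
Proof.
  intros Hl H1 H2; pose proof (secular_term_gap g d l1 l2 H1 H2) as E.
  enough (0 <= (g * d) ^ 2 * (l2 - l1) * ((1 - l1 * g) + (1 - l2 * g))
                / ((1 - l1 * g) ^ 2 * (1 - l2 * g) ^ 2)) by lra.
  unfold Rdiv; apply Rmult_le_pos.
  - apply Rmult_le_pos; [apply Rmult_le_pos; [apply pow2_ge_0 | lra] | lra].
  - apply Rlt_le, Rinv_0_lt_compat, Rmult_lt_0_compat; apply pow_lt; lra.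
Qed.

Lemma secular_term_lt g d l1 l2 : l1 < l2 -> 0 < 1 - l1 * g -> 0 < 1 - l2 * g ->
  g * d <> 0 -> g * d ^ 2 / (1 - l1 * g) ^ 2 < g * d ^ 2 / (1 - l2 * g) ^ 2.
Proof.
  intros Hl H1 H2 Hgd; pose proof (secular_term_gap g d l1 l2 H1 H2) as E.
  enough (0 < (g * d) ^ 2 * (l2 - l1) * ((1 - l1 * g) + (1 - l2 * g))
                / ((1 - l1 * g) ^ 2 * (1 - l2 * g) ^ 2)) by lra.
  apply Rdiv_lt_0_compat.
  - apply Rmult_lt_0_compat; [apply Rmult_lt_0_compat | lra]; [|lra].
    rewrite <- Rsqr_pow2; now apply Rsqr_pos_lt.
  - apply Rmult_lt_0_compat; apply pow_lt; lra.
Qed.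

Section AdmissibleRegion.

Variables (q : nat) (gamma : nat -> R).
Hypotheses (hq : (1 <= q)%nat)
  (hgdec : forall i, (S i < q)%nat -> gamma (S i) < gamma i)
  (hgnz : forall i, (i < q)%nat -> gamma i <> 0)
  (hg1 : 0 < gamma 0%nat).

Lemma gamma_antitone i j : (i <= j)%nat -> (j < q)%nat -> gamma j <= gamma i.
Proof.
  induction 1 as [|j Hij IH]; intros Hj; [lra|].
  pose proof (hgdec j Hj); pose proof (IH ltac:(lia)); lra.
Qed.

Lemma Lam_int_endpoints l : Lam_int q gamma l ->
  l * gamma 0%nat < 1 /\ l * gamma (q - 1)%nat < 1.
Proof.
  unfold Lam_int; pose proof (gamma_antitone 0 (q - 1) ltac:(lia) ltac:(lia)).
  assert (gamma 0%nat * / gamma 0%nat = 1) by (field; lra).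
  destruct (Rlt_dec 0 (gamma (q - 1)%nat)) as [Hpos|Hneg]; intros Hl.
  - assert (l * gamma 0%nat < 1) by nra.
    split; [assumption | destruct (Rle_dec l 0); nra].
  - assert (Hlast : gamma (q - 1)%nat < 0) by (pose proof (hgnz (q - 1) ltac:(lia)); lra).
    assert (gamma (q - 1)%nat * / gamma (q - 1)%nat = 1) by (field; lra).
    split; nra.
Qed.

(* l * gamma is linear in gamma, so its bound at the two extreme eigenvalues propagates. *)
Lemma Lam_int_den_pos l i : Lam_int q gamma l -> (i < q)%nat -> 0 < 1 - l * gamma i.
Proof.
  intros Hl Hi; destruct (Lam_int_endpoints l Hl).
  pose proof (gamma_antitone 0 i ltac:(lia) Hi).
  pose proof (gamma_antitone i (q - 1) ltac:(lia) ltac:(lia)).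
  destruct (Rle_dec 0 l); nra.
Qed.

Lemma Lam_int_Delta_den_pos b l j : Lam_int q gamma l -> (j < dim b q)%nat ->
  0 < 1 - l * Delta b gamma j.
Proof.
  intros Hl Hj; destruct b; unfold dim, Delta in *.
  - destruct j as [|j]; [lra | apply Lam_int_den_pos; [exact Hl | lia]].
  - now apply Lam_int_den_pos.
Qed.

Lemma Lam_int_nonempty : exists l, Lam_int q gamma l.
Proof.
  unfold Lam_int; pose proof (Rinv_0_lt_compat _ hg1).
  destruct (Rlt_dec 0 (gamma (q - 1)%nat)) as [Hpos|Hneg].
  - exists (/ gamma 0%nat - 1); lra.
  - assert (Hlast : gamma (q - 1)%nat < 0) by (pose proof (hgnz (q - 1) ltac:(lia)); lra).
    pose proof (Rinv_lt_0_compat _ Hlast); exists 0; lra.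
Qed.

End AdmissibleRegion.

Lemma Lam_int_between q gamma x y z :
  Lam_int q gamma x -> Lam_int q gamma y -> x <= z <= y -> Lam_int q gamma z.
Proof. unfold Lam_int; destruct Rlt_dec; intros; lra. Qed.

Lemma Lam_int_open q gamma l : Lam_int q gamma l ->
  exists l1 l2, Lam_int q gamma l1 /\ Lam_int q gamma l2 /\ l1 < l /\ l < l2.
Proof.
  unfold Lam_int; destruct Rlt_dec; intros H.
  - exists (l - 1), ((l + / gamma 0%nat) / 2); lra.
  - exists ((l + / gamma (q - 1)%nat) / 2), ((l + / gamma 0%nat) / 2); lra.
Qed.

Lemma wlam_lt b q gamma delta eps l j : (j < dim b q)%nat ->
  wlam b q gamma delta eps l j
  = (w0 b q delta j + l * dvec b eps j) / (1 - l * Delta b gamma j).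
Proof. intros Hj; unfold wlam; now rewrite (proj2 (Nat.leb_gt _ _) Hj). Qed.

Lemma wlam_Rvec b q gamma delta eps l : Rvec (dim b q) (wlam b q gamma delta eps l).
Proof. intros j Hj; unfold wlam; now rewrite (proj2 (Nat.leb_le _ _) Hj). Qed.

Section SecularEquation.

Variables (q : nat) (gamma delta : nat -> R) (kst eps : R) (b : bool).
Hypotheses (hq : (1 <= q)%nat)
  (hgdec : forall i, (S i < q)%nat -> gamma (S i) < gamma i)
  (hgnz : forall i, (i < q)%nat -> gamma i <> 0)
  (hg1 : 0 < gamma 0%nat)
  (heps : if b then 0 < eps else eps = 0).

Local Notation F := (fsec q gamma delta eps kst).
Local Notation wl := (wlam b q gamma delta eps).

Definition degenerate : Prop := eps = 0 /\ forall i, (i < q)%nat -> delta i = 0.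

Lemma wlam_degenerate l : degenerate -> wl l = fun _ => 0.
Proof.
  intros [He Hd]; apply functional_extensionality; intros j.
  destruct (Nat.lt_ge_cases j (dim b q)) as [Hj|Hj]; [|apply wlam_Rvec, Hj].
  rewrite wlam_lt by exact Hj; unfold w0, dvec; rewrite (proj2 (Nat.leb_gt _ _) Hj), He.
  destruct b; unfold dim in Hj; [destruct j as [|j]|];
    rewrite ?Hd by lia; unfold Rdiv; ring.
Qed.

Lemma Qstar_wlam l : Lam_int q gamma l -> Qstar b q gamma eps kst (wl l) = F l.
Proof.
  intros Hl; pose proof (Lam_int_den_pos q gamma hq hgdec hgnz hg1 l) as P.
  assert (Hsec : forall i, (i < q)%nat ->
    gamma i * (delta i / (1 - l * gamma i)) ^ 2 = gamma i * delta i ^ 2 / (1 - l * gamma i) ^ 2).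
  { intros i Hi; pose proof (P i Hl Hi); field; lra. }
  unfold Qstar, fsec; destruct b; unfold dim.
  - (* the coordinate y = w(lambda)_0 = lambda eps contributes 2 eps^2 lambda *)
    rewrite !rsum_succ_l, (rsum_eq0 q (fun i => dvec true eps (S i) * _))
      by (intros; unfold dvec; ring).
    rewrite <- (rsum_ext q _ _ Hsec).
    rewrite (rsum_ext q (fun i => Delta true gamma (S i) * _ ^ 2)
               (fun i => gamma i * (delta i / (1 - l * gamma i)) ^ 2)).
    + rewrite wlam_lt by (unfold dim; lia); unfold w0, dim, dvec, Delta; simpl; field.
    + intros i Hi; rewrite wlam_lt by (unfold dim; lia); unfold w0, dim, dvec, Delta.
      rewrite (proj2 (Nat.leb_gt (S q) (S i)) ltac:(lia)), Rmult_0_r, Rplus_0_r; reflexivity.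
  - subst eps; rewrite (rsum_eq0 q (fun i => dvec false 0 i * _)) by (intros; unfold dvec; ring).
    rewrite <- (rsum_ext q _ _ Hsec).
    rewrite (rsum_ext q (fun i => Delta false gamma i * _ ^ 2)
               (fun i => gamma i * (delta i / (1 - l * gamma i)) ^ 2)); [ring|].
    intros i Hi; rewrite wlam_lt by (unfold dim; lia); unfold w0, dim, dvec, Delta.
    rewrite (proj2 (Nat.leb_gt _ _) Hi), Rmult_0_r, Rplus_0_r; reflexivity.
Qed.

Lemma Wl_iff l w : Lam_int q gamma l ->
  Wl b q gamma delta eps kst l w <-> w = wl l /\ F l = 0.
Proof.
  intros Hl; pose proof (fun j => Lam_int_Delta_den_pos q gamma hq hgdec hgnz hg1 b l j Hl) as P.
  rewrite <- (Qstar_wlam l Hl); split.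
  - intros [[Hw HQ] Hstat].
    assert (Hwl : w = wl l).
    { apply functional_extensionality; intros j.
      destruct (Nat.lt_ge_cases j (dim b q)) as [Hj|Hj].
      - rewrite wlam_lt, <- (Hstat j Hj) by exact Hj; field; pose proof (P j Hj); lra.
      - rewrite (Hw j Hj); symmetry; now apply wlam_Rvec. }
    split; [exact Hwl | now rewrite <- Hwl].
  - intros [-> HQ]; split; [split; [apply wlam_Rvec | exact HQ]|].
    intros j Hj; rewrite wlam_lt by exact Hj; field; pose proof (P j Hj); lra.
Qed.

Lemma Wcirc_iff w : Wcirc b q gamma delta eps kst w <->
  exists l, Lam_int q gamma l /\ F l = 0 /\ w = wl l.
Proof.
  split.
  - intros [l [Hl HW]]; apply (Wl_iff l w Hl) in HW; exists l; tauto.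
  - intros [l [Hl [HF ->]]]; exists l; split; [exact Hl|]; now apply Wl_iff.
Qed.

Definition wdist2 (l : R) (v : nat -> R) : R :=
  rsum (dim b q) (fun j => (1 - l * Delta b gamma j) * (v j - wl l j) ^ 2).

Lemma wdist2_ge0 l v : Lam_int q gamma l -> 0 <= wdist2 l v.
Proof.
  intros Hl; apply rsum_ge0; intros j Hj.
  pose proof (Lam_int_Delta_den_pos q gamma hq hgdec hgnz hg1 b l j Hl Hj).
  apply Rmult_le_pos; [lra | apply pow2_ge_0].
Qed.

Lemma wdist2_eq0 l v : Lam_int q gamma l -> Rvec (dim b q) v ->
  wdist2 l v = 0 -> v = wl l.
Proof.
  intros Hl Hv H0; apply functional_extensionality; intros j.
  destruct (Nat.lt_ge_cases j (dim b q)) as [Hj|Hj];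
    [| rewrite (Hv j Hj); symmetry; now apply wlam_Rvec].
  pose proof (Lam_int_Delta_den_pos q gamma hq hgdec hgnz hg1 b l j Hl Hj).
  assert (Hterm := rsum_ge0_eq0 _ _
    (fun i Hi => Rmult_le_pos _ _
       (Rlt_le _ _ (Lam_int_Delta_den_pos q gamma hq hgdec hgnz hg1 b l i Hl Hi))
       (pow2_ge_0 _)) H0 j Hj); cbv beta in Hterm.
  apply Rmult_integral in Hterm as [Hk|Hsq]; [lra|].
  destruct (Req_dec (v j - wl l j) 0) as [Hz|Hnz]; [lra|].
  exfalso; exact (pow_nonzero _ 2 Hnz Hsq).
Qed.

(* Completing the square: the Lagrangian term lambda Q*(v) is constant on W. *)
Lemma dist2_decomp l : Lam_int q gamma l -> exists K, forall v,
  dist2 b q delta v = l * (Qstar b q gamma eps kst v + kst) + wdist2 l v + K.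
Proof.
  intros Hl; pose proof (Lam_int_Delta_den_pos q gamma hq hgdec hgnz hg1 b l) as P.
  exists (rsum (dim b q) (fun j => w0 b q delta j ^ 2
    - (w0 b q delta j + l * dvec b eps j) ^ 2 / (1 - l * Delta b gamma j))).
  intros v; unfold dist2, Qstar, wdist2.
  rewrite (rsum_complete_square _ (Delta b gamma) (dvec b eps) (w0 b q delta) v l) by
    (intros j Hj; pose proof (P j Hl Hj); lra).
  rewrite (rsum_ext _ (fun j => (1 - l * Delta b gamma j) * (v j - wl l j) ^ 2)
    (fun j => (1 - l * Delta b gamma j)
       * (v j - (w0 b q delta j + l * dvec b eps j) / (1 - l * Delta b gamma j)) ^ 2))
    by (intros j Hj; now rewrite wlam_lt by exact Hj).
  ring.
Qed.

Lemma What_iff l w : Lam_int q gamma l -> F l = 0 ->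
  What b q gamma delta eps kst w <-> w = wl l.
Proof.
  intros Hl HF; destruct (dist2_decomp l Hl) as [K HK].
  assert (Hwl : InW b q gamma eps kst (wl l))
    by (split; [apply wlam_Rvec | now rewrite Qstar_wlam]).
  assert (Hself : wdist2 l (wl l) = 0)
    by (apply rsum_eq0; intros; rewrite Rminus_diag; ring).
  split.
  - intros [[Hv HQ] Hmin]; specialize (Hmin _ Hwl).
    rewrite !HK, HQ, Hself, (proj2 Hwl) in Hmin.
    apply wdist2_eq0; [exact Hl | exact Hv |].
    pose proof (wdist2_ge0 l w Hl); lra.
  - intros ->; split; [exact Hwl|]; intros v [Hv HQ].
    rewrite !HK, HQ, Hself, (proj2 Hwl); pose proof (wdist2_ge0 l v Hl); lra.
Qed.

Lemma fsec_degenerate l : degenerate -> F l = - kst.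
Proof.
  intros [He Hd]; unfold fsec; rewrite rsum_eq0, He; [ring|].
  intros i Hi; rewrite Hd by exact Hi; unfold Rdiv; ring.
Qed.

Lemma fsec_increasing l1 l2 : ~ degenerate ->
  Lam_int q gamma l1 -> Lam_int q gamma l2 -> l1 < l2 -> F l1 < F l2.
Proof.
  intros Hnd H1 H2 Hlt; unfold fsec.
  pose proof (Lam_int_den_pos q gamma hq hgdec hgnz hg1 l1) as P1.
  pose proof (Lam_int_den_pos q gamma hq hgdec hgnz hg1 l2) as P2.
  set (s l := rsum q (fun i => gamma i * delta i ^ 2 / (1 - l * gamma i) ^ 2)).
  change (s l1 + 2 * eps ^ 2 * l1 - kst < s l2 + 2 * eps ^ 2 * l2 - kst).
  assert (Hs : s l1 <= s l2)
    by (apply rsum_le; intros i Hi; apply secular_term_le; auto).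
  destruct (Req_dec eps 0) as [He|He].
  - destruct (classic (exists i, (i < q)%nat /\ delta i <> 0)) as [[i [Hi Hd]]|Hnone].
    + enough (s l1 < s l2) by (rewrite He; lra).
      apply rsum_lt; [intros j Hj; apply secular_term_le; auto|].
      exists i; split; [exact Hi|]; apply secular_term_lt; auto.
    + exfalso; apply Hnd; split; [exact He|]; intros i Hi.
      destruct (Req_dec (delta i) 0) as [Hz|Hnz]; [exact Hz|].
      exfalso; apply Hnone; eauto.
  - assert (0 < eps ^ 2) by (rewrite <- Rsqr_pow2; now apply Rsqr_pos_lt).
    nra.
Qed.

Lemma fsec_continuity_pt l : Lam_int q gamma l -> continuity_pt F l.
Proof.
  intros Hl; unfold fsec.
  apply continuity_pt_minus; [apply continuity_pt_plus|apply continuity_pt_const; now intros].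
  - apply (continuity_pt_rsum q (fun x i => gamma i * delta i ^ 2 / (1 - x * gamma i) ^ 2)).
    intros i Hi; pose proof (Lam_int_den_pos q gamma hq hgdec hgnz hg1 l i Hl Hi).
    apply derivable_continuous_pt; reg; apply pow_nonzero; lra.
  - apply derivable_continuous_pt; reg.
Qed.

Lemma fsec_root_unique l1 l2 : ~ degenerate -> Lam_int q gamma l1 -> Lam_int q gamma l2 ->
  F l1 = 0 -> F l2 = 0 -> l1 = l2.
Proof.
  intros Hnd H1 H2 F1 F2; destruct (Rtotal_order l1 l2) as [Hlt|[Heq|Hgt]]; [|exact Heq|].
  - pose proof (fsec_increasing l1 l2 Hnd H1 H2 Hlt); lra.
  - pose proof (fsec_increasing l2 l1 Hnd H2 H1 Hgt); lra.
Qed.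

Lemma secular_sign_change :
  (exists l, Lam_int q gamma l /\ F l < 0) /\ (exists l, Lam_int q gamma l /\ 0 < F l) ->
  exists lh, Lam_int q gamma lh /\ F lh = 0 /\
    (forall l, Lam_int q gamma l -> F l = 0 -> l = lh) /\
    (forall w, What b q gamma delta eps kst w <-> w = wl lh) /\
    (forall w, Wcirc b q gamma delta eps kst w <-> w = wl lh).
Proof.
  intros [[l1 [H1 F1]] [l2 [H2 F2]]].
  assert (Hnd : ~ degenerate).
  { intros Hd; rewrite (fsec_degenerate l1 Hd) in F1.
    rewrite (fsec_degenerate l2 Hd) in F2; lra. }
  assert (Hlt : l1 < l2).
  { destruct (Rlt_le_dec l1 l2) as [Hlt|Hle]; [exact Hlt|].
    destruct (Req_dec l2 l1) as [->|Hne]; [lra|].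
    pose proof (fsec_increasing l2 l1 Hnd H2 H1 ltac:(lra)); lra. }
  destruct (Ranalysis5.IVT_interv F l1 l2
              (fun a Ha => fsec_continuity_pt a (Lam_int_between q gamma l1 l2 a H1 H2 Ha))
              Hlt F1 F2) as [lh [Hbetween Hroot]].
  pose proof (Lam_int_between q gamma l1 l2 lh H1 H2 Hbetween) as Hh.
  exists lh; split; [exact Hh | split; [exact Hroot | split; [|split]]].
  - intros l Hl Fl; exact (fsec_root_unique l lh Hnd Hl Hh Fl Hroot).
  - intros w; exact (What_iff lh w Hh Hroot).
  - intros w; rewrite Wcirc_iff; split.
    + intros [l [Hl [Fl ->]]]; now rewrite (fsec_root_unique l lh Hnd Hl Hh Fl Hroot).
    + intros ->; exists lh; auto.
Qed.

Lemma secular_identically_zero :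
  (forall l, Lam_int q gamma l -> F l = 0) ->
  (forall w, What b q gamma delta eps kst w <-> w = (fun _ => 0)) /\
  (forall w, Wcirc b q gamma delta eps kst w <-> w = (fun _ => 0)).
Proof.
  intros Hzero; destruct (Lam_int_nonempty q gamma hq hgnz hg1) as [l0 H0].
  assert (Hd : degenerate).
  { destruct (classic degenerate) as [Hd|Hnd]; [exact Hd|].
    destruct (Lam_int_open q gamma l0 H0) as [l1 [_ [H1 [_ [Hlt _]]]]].
    pose proof (fsec_increasing l1 l0 Hnd H1 H0 Hlt).
    rewrite (Hzero l1 H1), (Hzero l0 H0) in *; lra. }
  split; intros w.
  - rewrite <- (wlam_degenerate l0 Hd); exact (What_iff l0 w H0 (Hzero l0 H0)).
  - rewrite Wcirc_iff; split.
    + intros [l [_ [_ ->]]]; apply wlam_degenerate, Hd.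
    + intros ->; exists l0; rewrite (wlam_degenerate l0 Hd); auto.
Qed.

(* A root in the interior forces either a sign change (f increasing) or f = 0 (f constant). *)
Lemma secular_no_root :
  ~ ((exists l, Lam_int q gamma l /\ F l < 0) /\ (exists l, Lam_int q gamma l /\ 0 < F l)) ->
  ~ (forall l, Lam_int q gamma l -> F l = 0) ->
  (forall l, Lam_int q gamma l -> F l <> 0) /\
  (forall w, ~ Wcirc b q gamma delta eps kst w).
Proof.
  intros Hnsign Hnzero.
  assert (Hnoroot : forall l, Lam_int q gamma l -> F l <> 0).
  { intros l Hl Fl; destruct (classic degenerate) as [Hd|Hnd].
    - apply Hnzero; intros l' _; rewrite (fsec_degenerate l' Hd).
      now rewrite (fsec_degenerate l Hd) in Fl.
    - destruct (Lam_int_open q gamma l Hl) as [l1 [l2 [H1 [H2 [Hlt1 Hlt2]]]]].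
      pose proof (fsec_increasing l1 l Hnd H1 Hl Hlt1).
      pose proof (fsec_increasing l l2 Hnd Hl H2 Hlt2).
      apply Hnsign; split; [exists l1 | exists l2]; split; auto; lra. }
  split; [exact Hnoroot|].
  intros w Hw; apply Wcirc_iff in Hw as [l [Hl [Fl _]]]; exact (Hnoroot l Hl Fl).
Qed.

End SecularEquation.

Theorem proposition8p2
  (q : nat) (gamma delta : nat -> R) (kst eps : R) (b : bool)
  (hq : (1 <= q)%nat)
  (hgdec : forall i, (S i < q)%nat -> gamma (S i) < gamma i)
  (hgnz : forall i, (i < q)%nat -> gamma i <> 0)
  (hg1 : 0 < gamma 0%nat)
  (hdelta : forall i, (i < q)%nat -> 0 <= delta i)
  (heps : if b then 0 < eps else eps = 0)
  (hW : exists w, InW b q gamma eps kst w) :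
  ((exists l, Lam_int q gamma l /\ fsec q gamma delta eps kst l < 0) /\
   (exists l, Lam_int q gamma l /\ 0 < fsec q gamma delta eps kst l) ->
   exists lh, Lam_int q gamma lh /\ fsec q gamma delta eps kst lh = 0 /\
     (forall l, Lam_int q gamma l -> fsec q gamma delta eps kst l = 0 -> l = lh) /\
     (forall w, What b q gamma delta eps kst w <-> w = wlam b q gamma delta eps lh) /\
     (forall w, Wcirc b q gamma delta eps kst w <-> w = wlam b q gamma delta eps lh))
  /\
  ((forall l, Lam_int q gamma l -> fsec q gamma delta eps kst l = 0) ->
   (forall l, Lam_int q gamma l -> fsec q gamma delta eps kst l = 0) /\
   (forall w, What b q gamma delta eps kst w <-> w = (fun _ => 0)) /\
   (forall w, Wcirc b q gamma delta eps kst w <-> w = (fun _ => 0)))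
  /\
  (~ ((exists l, Lam_int q gamma l /\ fsec q gamma delta eps kst l < 0) /\
      (exists l, Lam_int q gamma l /\ 0 < fsec q gamma delta eps kst l)) ->
   ~ (forall l, Lam_int q gamma l -> fsec q gamma delta eps kst l = 0) ->
   (forall l, Lam_int q gamma l -> fsec q gamma delta eps kst l <> 0) /\
   (forall w, ~ Wcirc b q gamma delta eps kst w)).
Proof.
  split; [|split].
  - exact (secular_sign_change q gamma delta kst eps b hq hgdec hgnz hg1 heps).
  - intros Hzero; split; [exact Hzero|].
    exact (secular_identically_zero q gamma delta kst eps b hq hgdec hgnz hg1 heps Hzero).
  - exact (secular_no_root q gamma delta kst eps b hq hgdec hgnz hg1 heps).
Qed.
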